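(* If $\nu>-1$, then the function $x\mapsto -\mathcal{J}_\nu'(x)$ is strictly log-concave on $(0,j_{\nu+1,1})$.
   Context: For $\nu>-1$ define $\mathcal{J}_\nu:\mathbb{R}\to(-\infty,1]$ by $\mathcal{J}_\nu(x)=\sum_{n\ge0}\frac{(-1/4)^n}{(\nu+1)_n\, n!}x^{2n}$, equivalently $\mathcal{J}_\nu(x)=2^\nu\Gamma(\nu+1)x^{-\nu}J_\nu(x)$ for $x>0$, where $J_\nu$ is the Bessel function of the first kind and $(a)_n$ is the Pochhammer symbol. $j_{\mu,1}$ denotes the first positive zero of $J_\mu$. Note that $-\mathcal{J}_\nu'(x)>0$ on $(0,j_{\nu+1,1})$. *)

From Stdlib Require Import Reals Lra ClassicalEpsilon Arith Factorial.
Open Scope R_scope.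

Fixpoint poch (a : R) (n : nat) : R :=
  match n with
  | O => 1
  | S k => poch a k * (a + INR k)
  end.

Definition Jcal_term (nu x : R) (n : nat) : R :=
  (-1/4) ^ n / (poch (nu + 1) n * INR (fact n)) * x ^ (2 * n).

(* Normalized Bessel function: the sum of the (everywhere convergent, for
   nu > -1) series  sum_{n>=0} (-1/4)^n / ((nu+1)_n n!) x^(2n).
   Chosen by Hilbert's epsilon among the limits of the partial sums
   (the limit is unique when it exists). *)
Definition Jcal (nu x : R) : R :=
  epsilon (inhabits 0) (fun l => infinite_sum (Jcal_term nu x) l).

(* j is the first positive zero of J_mu.  For x > 0,
   J_mu(x) = (x/2)^mu / Gamma(mu+1) * Jcal mu x with a positive factor,
   so the positive zeros of J_mu are exactly those of Jcal mu. *)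
Definition first_pos_zero (mu j : R) : Prop :=
  0 < j /\ Jcal mu j = 0 /\ (forall x, 0 < x < j -> Jcal mu x <> 0).

Definition strictly_log_concave_on (g : R -> R) (a b : R) : Prop :=
  (forall x, a < x < b -> 0 < g x) /\
  (forall x y t, a < x < b -> a < y < b -> x <> y -> 0 < t < 1 ->
     t * ln (g x) + (1 - t) * ln (g y) < ln (g (t * x + (1 - t) * y))).

From Stdlib Require Import Reals Lra Psatz Arith Factorial ClassicalEpsilon FunctionalExtensionality.
From Coquelicot Require Import Coquelicot.
Open Scope R_scope.

(* Write Jcal nu x = Phi nu (x^2), where Phi a y = sum_n (-1/4)^n/((a+1)_n n!) y^n
   is an entire power series.  Termwise differentiation gives
   Phi a' = -Phi (a+1) / (4(a+1)), and a shift of the coefficients gives the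
   contiguous relation y Phi (a+2) = 4(a+1)(a+2)(Phi (a+1) - Phi a).  Hence, with
   a = nu+1, F = Phi a and G = Phi (a+1):
     -Jcal_nu'(x) = x F(x^2) / (2a),   F' = -G/(4(a+1)),   y G' = (a+1)(F - G).
   The core of the file is an abstract section deriving from this system alone that
   x |-> x F(x^2) is strictly log-concave on (0,j) whenever F(x^2) has no zero there:
   the logarithmic derivative is 1/x - k(x) with k(x) = x G(x^2)/(2(a+1)F(x^2)), and
   k' = K(x^2)/F(x^2)^2 for a quadratic form K in (F,G) which is positive because
   y^(a+1) K(y) is increasing and K(0) > 0.  A strictly decreasing derivative then
   gives strict concavity of the logarithm. *)

Lemma strict_concave_of_decreasing_derivative (f f' : R -> R) (l r : R) :
  (forall x, l < x < r -> derivable_pt_lim f x (f' x)) ->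
  (forall x y, l < x -> x < y -> y < r -> f' y < f' x) ->
  forall x y t, l < x < r -> l < y < r -> x <> y -> 0 < t < 1 ->
    t * f x + (1 - t) * f y < f (t * x + (1 - t) * y).
Proof.
  intros Hd Hdec.
  assert (Hlt : forall x y t, l < x -> x < y -> y < r -> 0 < t < 1 ->
            t * f x + (1 - t) * f y < f (t * x + (1 - t) * y)).
  { intros x y t Hx Hxy Hy Ht. set (z := t * x + (1 - t) * y).
    assert (Hz : x < z < y) by (unfold z; nra).
    destruct (MVT_cor2 f f' x z) as [c1 [E1 Hc1]]; [lra | intros c Hc; apply Hd; lra |].
    destruct (MVT_cor2 f f' z y) as [c2 [E2 Hc2]]; [lra | intros c Hc; apply Hd; lra |].
    assert (Hc12 : f' c2 < f' c1) by (apply Hdec; lra).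
    assert (E : t * f x + (1 - t) * f y - f z = t * (1 - t) * (y - x) * (f' c2 - f' c1)).
    { replace (t * f x + (1 - t) * f y - f z) with
        (- t * (f z - f x) + (1 - t) * (f y - f z)) by ring.
      rewrite E1, E2. unfold z; ring. }
    assert (0 < t * (1 - t) * (y - x)) by (apply Rmult_lt_0_compat; nra).
    nra. }
  intros x y t Hx Hy Hxy Ht. destruct (Rlt_or_le x y).
  - apply Hlt; lra.
  - pose proof (Hlt y x (1 - t) ltac:(lra) ltac:(lra) ltac:(lra) ltac:(lra)).
    replace (t * x + (1 - t) * y) with ((1 - t) * y + (1 - (1 - t)) * x) by ring.
    lra.
Qed.

Lemma continuity_pt_pos_near (f : R -> R) (x0 : R) :
  continuity_pt f x0 -> 0 < f x0 ->
  exists d, 0 < d /\ forall y, Rabs (y - x0) < d -> 0 < f y.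
Proof.
  intros Hc Hpos.
  destruct (Hc (f x0 / 2)) as [d [Hd Hnear]]; [lra |].
  exists d. split; [exact Hd |]. intros y Hy.
  destruct (Req_dec y x0) as [-> | Hne]; [exact Hpos |].
  assert (Hfy : Rabs (f y - f x0) < f x0 / 2).
  { apply Hnear. split; [split; [constructor | auto] | exact Hy]. }
  apply Rabs_def2 in Hfy. lra.
Qed.

Lemma poch_pos (b : R) (n : nat) : 0 < b -> 0 < poch b n.
Proof.
  intros Hb; induction n as [|n IH]; simpl; [lra |].
  apply Rmult_lt_0_compat; auto. pose proof (pos_INR n); lra.
Qed.

Lemma poch_S (b : R) (n : nat) : poch b (S n) = b * poch (b + 1) n.
Proof.
  induction n as [|n IH]; [simpl; ring |].
  change (poch b (S (S n))) with (poch b (S n) * (b + INR (S n))).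
  rewrite IH. simpl poch. rewrite S_INR. ring.
Qed.

Definition bessel_coef (a : R) (n : nat) : R :=
  (-1/4) ^ n / (poch (a + 1) n * INR (fact n)).

Definition Phi (a y : R) : R := PSeries (bessel_coef a) y.

Lemma bessel_coef_neq0 (a : R) (n : nat) : -1 < a -> bessel_coef a n <> 0.
Proof.
  intros Ha. unfold bessel_coef. apply Rmult_integral_contrapositive_currified.
  - apply pow_nonzero; lra.
  - apply Rinv_neq_0_compat, Rgt_not_eq, Rmult_lt_0_compat.
    + apply poch_pos; lra.
    + apply INR_fact_lt_0.
Qed.

Lemma bessel_coef_ratio (a : R) (n : nat) : -1 < a ->
  bessel_coef a (S n) / bessel_coef a n = (-1/4) / ((a + 1 + INR n) * INR (S n)).
Proof.
  intros Ha. unfold bessel_coef. simpl poch. rewrite fact_simpl, mult_INR, S_INR.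
  pose proof (poch_pos (a + 1) n ltac:(lra)). pose proof (INR_fact_lt_0 n).
  pose proof (pos_INR n).
  simpl pow. field. repeat split; try lra; apply pow_nonzero; lra.
Qed.

Lemma bessel_coef_radius (a : R) : -1 < a -> CV_radius (bessel_coef a) = p_infty.
Proof.
  intros Ha. apply CV_radius_infinite_DAlembert.
  - intros n; apply bessel_coef_neq0; auto.
  - apply is_lim_seq_le_le with (u := fun _ => 0)
      (w := fun n => / (4 * (a + 1)) * / INR (S n)).
    + intros n. rewrite bessel_coef_ratio by auto.
      pose proof (pos_INR n). rewrite S_INR.
      rewrite Rabs_div by (apply Rgt_not_eq; nra).
      rewrite Rabs_left by lra. rewrite Rabs_pos_eq by nra.
      split; [apply Rlt_le, Rdiv_lt_0_compat; nra |].
      replace (- (-1/4) / ((a + 1 + INR n) * (INR n + 1))) with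
        (/ (4 * (a + 1 + INR n) * (INR n + 1))) by (field; lra).
      rewrite <- Rinv_mult. apply Rinv_le_contravar; nra.
    + apply is_lim_seq_const.
    + replace (Finite 0) with (Rbar_mult (/ (4 * (a + 1))) 0) by (simpl; f_equal; ring).
      apply is_lim_seq_scal_l.
      replace (Finite 0) with (Rbar_inv p_infty) by reflexivity.
      apply is_lim_seq_inv; [| discriminate].
      apply (is_lim_seq_incr_1 INR), is_lim_seq_INR.
Qed.

Lemma bessel_coef_inside (a y : R) : -1 < a -> Rbar_lt (Rabs y) (CV_radius (bessel_coef a)).
Proof. intros Ha; rewrite bessel_coef_radius; simpl; auto. Qed.

Lemma Phi_0 (a : R) : Phi a 0 = 1.
Proof. unfold Phi. rewrite PSeries_0. unfold bessel_coef. simpl. field. Qed.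

Lemma PS_derive_bessel_coef (a : R) (n : nat) : -1 < a ->
  PS_derive (bessel_coef a) n = - bessel_coef (a + 1) n / (4 * (a + 1)).
Proof.
  intros Ha. unfold PS_derive, bessel_coef. rewrite poch_S, fact_simpl, mult_INR, S_INR.
  pose proof (poch_pos (a + 1 + 1) n ltac:(lra)). pose proof (INR_fact_lt_0 n).
  pose proof (pos_INR n).
  simpl pow. field. repeat split; try lra; apply pow_nonzero; lra.
Qed.

Lemma Phi_derive (a y : R) : -1 < a ->
  derivable_pt_lim (Phi a) y (- Phi (a + 1) y / (4 * (a + 1))).
Proof.
  intros Ha. apply is_derive_Reals. unfold Phi.
  replace (- PSeries (bessel_coef (a + 1)) y / (4 * (a + 1)))
    with (PSeries (PS_derive (bessel_coef a)) y).
  { apply is_derive_PSeries, bessel_coef_inside; auto. }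
  rewrite (PSeries_ext _ (PS_scal (- / (4 * (a + 1))) (bessel_coef (a + 1)))).
  - rewrite PSeries_scal. field. lra.
  - intros n. rewrite PS_derive_bessel_coef by auto.
    unfold PS_scal, scal; simpl; unfold mult; simpl. field. lra.
Qed.

Lemma Phi_contiguous (a y : R) : -1 < a ->
  y * Phi (a + 2) y = 4 * (a + 1) * (a + 2) * (Phi (a + 1) y - Phi a y).
Proof.
  intros Ha. unfold Phi. rewrite <- PSeries_incr_1.
  rewrite <- PSeries_minus by (apply CV_radius_inside, bessel_coef_inside; lra).
  rewrite <- PSeries_scal. apply PSeries_ext. intros [|n];
    unfold PS_incr_1, PS_scal, PS_minus, bessel_coef, scal, plus, opp, mult; simpl;
    unfold mult, plus, opp; simpl.
  - unfold zero; simpl. field.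
  - assert (E1 : poch (a + 1 + 1) n * (a + 1 + 1 + INR n) = (a + 2) * poch (a + 2 + 1) n).
    { change (poch (a + 1 + 1) n * (a + 1 + 1 + INR n)) with (poch (a + 1 + 1) (S n)).
      rewrite poch_S. replace (a + 1 + 1) with (a + 2) by ring. reflexivity. }
    assert (E2 : poch (a + 1) n * (a + 1 + INR n)
                 = (a + 1) * ((a + 2) * poch (a + 2 + 1) n / (a + 2 + INR n))).
    { change (poch (a + 1) n * (a + 1 + INR n)) with (poch (a + 1) (S n)).
      rewrite poch_S, <- E1. replace (a + 1 + 1) with (a + 2) by ring. field.
      pose proof (pos_INR n); lra. }
    assert (E3 : INR (fact n + n * fact n) = (INR n + 1) * INR (fact n)).
    { rewrite plus_INR, mult_INR. ring. }
    rewrite E1, E2, E3.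
    pose proof (poch_pos (a + 2 + 1) n ltac:(lra)). pose proof (INR_fact_lt_0 n).
    pose proof (pos_INR n).
    field. repeat split; try lra; apply pow_nonzero; lra.
Qed.

Lemma Phi_shift_derive (a y : R) : -1 < a -> y <> 0 ->
  derivable_pt_lim (Phi (a + 1)) y ((a + 1) * (Phi a y - Phi (a + 1) y) / y).
Proof.
  intros Ha Hy.
  replace ((a + 1) * (Phi a y - Phi (a + 1) y) / y)
    with (- Phi (a + 1 + 1) y / (4 * (a + 1 + 1))).
  { apply Phi_derive; lra. }
  replace (a + 1 + 1) with (a + 2) by ring.
  pose proof (Phi_contiguous a y Ha).
  field_simplify_eq; [| split; lra].
  apply (Rmult_eq_reg_l y); auto. nra.
Qed.

Lemma Jcal_Phi (nu x : R) : -1 < nu -> Jcal nu x = Phi nu (x ^ 2).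
Proof.
  intros Hnu.
  assert (Hs : infinite_sum (Jcal_term nu x) (Phi nu (x ^ 2))).
  { apply is_series_Reals. unfold Phi.
    pose proof (PSeries_correct (bessel_coef nu) (x ^ 2)
                  (CV_radius_inside _ _ (bessel_coef_inside nu (x ^ 2) Hnu))) as H.
    eapply is_series_ext; [| exact H].
    intros n. simpl. rewrite pow_n_pow. unfold scal; simpl; unfold mult; simpl.
    unfold Jcal_term, bessel_coef. rewrite pow_mult.
    replace (x * (x * 1)) with (x ^ 2) by ring. ring. }
  unfold Jcal. apply (uniqueness_sum (Jcal_term nu x)); [| exact Hs].
  apply (epsilon_spec (inhabits 0) (fun l => infinite_sum (Jcal_term nu x) l)).
  exists (Phi nu (x ^ 2)); exact Hs.
Qed.

Lemma Jcal_derive (nu x : R) : -1 < nu ->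
  derivable_pt_lim (Jcal nu) x (- (x * Phi (nu + 1) (x ^ 2)) / (2 * (nu + 1))).
Proof.
  intros Hnu.
  replace (Jcal nu) with (fun x => Phi nu (x ^ 2))
    by (apply functional_extensionality; intros; symmetry; apply Jcal_Phi; auto).
  apply is_derive_Reals.
  replace (- (x * Phi (nu + 1) (x ^ 2)) / (2 * (nu + 1)))
    with (2 * x * (- Phi (nu + 1) (x ^ 2) / (4 * (nu + 1)))) by (field; lra).
  apply (is_derive_comp (Phi nu) (fun x => x ^ 2)).
  - apply is_derive_Reals, Phi_derive; lra.
  - auto_derive; auto. ring.
Qed.

Section LogConcavity.
(* F and G play the roles of Phi a and Phi (a+1); only the differential system
   linking them, their values at 0, and the absence of zeros of F(x^2) on (0,j)
   are used. *)
Variables (a j : R) (F G : R -> R).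
Hypothesis Ha : 0 < a.
Hypothesis Hj : 0 < j.
Hypothesis HF_derive : forall y, is_derive F y (- G y / (4 * (a + 1))).
Hypothesis HG_ex_derive : forall y, ex_derive G y.
Hypothesis HG_derive : forall y, y <> 0 -> is_derive G y ((a + 1) * (F y - G y) / y).
Hypothesis HF0 : F 0 = 1.
Hypothesis HG0 : G 0 = 1.
Hypothesis HF_no_zero : forall x, 0 < x < j -> F (x ^ 2) <> 0.

Lemma F_ex_derive (y : R) : ex_derive F y.
Proof. eexists; apply HF_derive. Qed.

Lemma Derive_F (y : R) : Derive F y = - G y / (4 * (a + 1)).
Proof. apply is_derive_unique, HF_derive. Qed.

Lemma Derive_G (y : R) : y <> 0 -> Derive G y = (a + 1) * (F y - G y) / y.
Proof. intros; apply is_derive_unique, HG_derive; auto. Qed.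

(* Since F(0) = 1 and F has no zero on (0, j^2), it is positive on [0, j^2). *)
Lemma F_pos (y : R) : 0 <= y < j ^ 2 -> 0 < F y.
Proof.
  intros [Hy0 Hyj].
  destruct (Rle_or_lt (F y) 0) as [Hle |]; auto. exfalso.
  assert (HFc : continuity F).
  { intros z. apply continuity_pt_filterlim.
    apply (ex_derive_continuous (K := R_AbsRing) (V := R_NormedModule)), F_ex_derive. }
  destruct (IVT_cor F 0 y HFc Hy0) as [z [[Hz0 Hzy] Hz]]; [rewrite HF0; lra |].
  destruct (Req_dec z 0) as [-> | Hz0']; [rewrite HF0 in Hz; lra |].
  apply (HF_no_zero (sqrt z)).
  - split; [apply sqrt_lt_R0; lra |].
    rewrite <- (sqrt_pow2 j) by lra.
    apply sqrt_lt_1; nra.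
  - rewrite pow2_sqrt by lra. exact Hz.
Qed.

(* The quadratic form governing the derivative of the logarithmic derivative. *)
Definition K (y : R) : R :=
  y * G y ^ 2 / (4 * (a + 1) ^ 2) - (2 * a + 1) * F y * G y / (2 * (a + 1)) + F y ^ 2.

Lemma K_pos_near_0 : exists d, 0 < d /\ forall y, 0 < y < d -> 0 < K y.
Proof.
  assert (HKc : continuity_pt K 0).
  { apply continuity_pt_filterlim.
    apply (ex_derive_continuous (K := R_AbsRing) (V := R_NormedModule)).
    unfold K. auto_derive. repeat split; auto using F_ex_derive. }
  assert (HK0 : K 0 = 1 / (2 * (a + 1))) by (unfold K; rewrite HF0, HG0; field; lra).
  destruct (continuity_pt_pos_near K 0 HKc) as [d [Hd Hnear]].
  { rewrite HK0. apply Rdiv_lt_0_compat; lra. }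
  exists d. split; auto. intros y Hy. apply Hnear.
  rewrite Rminus_0_r, Rabs_pos_eq; lra.
Qed.

(* y^(a+1) K(y), whose derivative y^a (y G^2/(4(a+1)^2) + F^2)/2 is manifestly
   nonnegative. *)
Definition weighted_K (y : R) : R := exp ((a + 1) * ln y) * K y.

Definition weighted_K' (y : R) : R :=
  exp ((a + 1) * ln y) / y * ((y * G y ^ 2 / (4 * (a + 1) ^ 2) + F y ^ 2) / 2).

Lemma weighted_K_derive (y : R) : 0 < y -> derivable_pt_lim weighted_K y (weighted_K' y).
Proof.
  intros Hy. apply is_derive_Reals. unfold weighted_K, weighted_K', K.
  auto_derive.
  - repeat split; auto using F_ex_derive.
  - rewrite Derive_F, Derive_G by lra. field. lra.
Qed.

(* K > 0 on (0, j^2): it is positive near 0, and y^(a+1) K(y) increases. *)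
Lemma K_pos (y : R) : 0 < y < j ^ 2 -> 0 < K y.
Proof.
  intros Hy. destruct K_pos_near_0 as [d [Hd Hnear]].
  set (z := Rmin (d / 2) (y / 2)).
  assert (Hz : 0 < z /\ z < y /\ z < d) by (unfold z, Rmin; destruct Rle_dec; lra).
  assert (HKz : 0 < K z) by (apply Hnear; lra).
  destruct (MVT_cor2 weighted_K weighted_K' z y) as [c [Hincr Hc]]; [lra | |].
  { intros c Hc. apply weighted_K_derive. lra. }
  assert (HFc : 0 < F c) by (apply F_pos; lra).
  assert (Hd' : 0 < weighted_K' c).
  { unfold weighted_K'. apply Rmult_lt_0_compat.
    - apply Rdiv_lt_0_compat; [apply exp_pos | lra].
    - assert (0 <= c * G c ^ 2 / (4 * (a + 1) ^ 2)).
      { apply Rmult_le_pos; [nra | apply Rlt_le, Rinv_0_lt_compat; nra]. }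
      nra. }
  assert (0 < weighted_K z) by (apply Rmult_lt_0_compat; auto; apply exp_pos).
  assert (Hwy : 0 < weighted_K y) by nra.
  unfold weighted_K in Hwy. pose proof (exp_pos ((a + 1) * ln y)). nra.
Qed.

(* k(x) = x G(x^2) / (2(a+1) F(x^2)); the logarithmic derivative of x F(x^2) is 1/x - k(x). *)
Definition k (x : R) : R := x * G (x ^ 2) / (2 * (a + 1) * F (x ^ 2)).

Lemma k_derive (x : R) : 0 < x < j -> derivable_pt_lim k x (K (x ^ 2) / F (x ^ 2) ^ 2).
Proof.
  intros Hx. assert (HF : 0 < F (x ^ 2)) by (apply F_pos; split; nra).
  apply is_derive_Reals. unfold k.
  auto_derive; replace (x * (x * 1)) with (x ^ 2) by ring.
  - repeat split; auto using F_ex_derive. nra.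
  - rewrite Derive_F, Derive_G by nra. unfold K. field. split; nra.
Qed.

Lemma k_increasing (x1 x2 : R) : 0 < x1 -> x1 < x2 -> x2 < j -> k x1 <= k x2.
Proof.
  intros H1 H2 H3.
  destruct (MVT_cor2 k (fun x => K (x ^ 2) / F (x ^ 2) ^ 2) x1 x2) as [c [Hincr Hc]]; [lra | |].
  { intros c Hc. apply k_derive. lra. }
  assert (0 < K (c ^ 2)) by (apply K_pos; split; nra).
  assert (0 < F (c ^ 2)) by (apply F_pos; split; nra).
  assert (0 < K (c ^ 2) / F (c ^ 2) ^ 2) by (apply Rdiv_lt_0_compat; nra).
  nra.
Qed.

Lemma ln_derive (x : R) : 0 < x < j ->
  derivable_pt_lim (fun x => ln (x * F (x ^ 2) / (2 * a))) x (1 / x - k x).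
Proof.
  intros Hx. assert (HF : 0 < F (x ^ 2)) by (apply F_pos; split; nra).
  apply is_derive_Reals.
  auto_derive; replace (x * (x * 1)) with (x ^ 2) by ring.
  - repeat split; auto using F_ex_derive. apply Rdiv_lt_0_compat; nra.
  - rewrite Derive_F. unfold k. field. repeat split; nra.
Qed.

(* The section's conclusion: ln (x F(x^2)/(2a)) has the strictly decreasing
   derivative 1/x - k(x). *)
Lemma scaled_F_log_concave :
  strictly_log_concave_on (fun x => x * F (x ^ 2) / (2 * a)) 0 j.
Proof.
  split.
  - intros x Hx. assert (0 < F (x ^ 2)) by (apply F_pos; split; nra).
    apply Rdiv_lt_0_compat; nra.
  - apply (strict_concave_of_decreasing_derivative
             (fun x => ln (x * F (x ^ 2) / (2 * a))) (fun x => 1 / x - k x)).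
    + exact ln_derive.
    + intros x y Hx Hxy Hy. pose proof (k_increasing x y Hx Hxy Hy).
      assert (1 / y < 1 / x) by (unfold Rdiv; rewrite !Rmult_1_l; apply Rinv_lt_contravar; nra).
      lra.
Qed.

End LogConcavity.

Theorem theorem2 (nu j : R) (dJ : R -> R) :
  -1 < nu ->
  (forall x, derivable_pt_lim (Jcal nu) x (dJ x)) ->
  first_pos_zero (nu + 1) j ->
  strictly_log_concave_on (fun x => - dJ x) 0 j.
Proof.
  intros Hnu HdJ [Hj [_ Hno_zero]].
  set (a := nu + 1).
  (* -dJ x = x Phi a (x^2) / (2a), by uniqueness of derivatives. *)
  replace (fun x => - dJ x) with (fun x => x * Phi a (x ^ 2) / (2 * a)).
  2:{ apply functional_extensionality. intros x.
      rewrite (uniqueness_limite _ _ _ _ (HdJ x) (Jcal_derive nu x Hnu)).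
      unfold a. field. lra. }
  apply (scaled_F_log_concave a j (Phi a) (Phi (a + 1))).
  - unfold a; lra.
  - exact Hj.
  - intros y. apply is_derive_Reals, Phi_derive. unfold a; lra.
  - intros y. eexists. apply is_derive_Reals, Phi_derive. unfold a; lra.
  - intros y Hy. apply is_derive_Reals, Phi_shift_derive; auto. unfold a; lra.
  - apply Phi_0.
  - apply Phi_0.
  - intros x Hx. rewrite <- Jcal_Phi by (unfold a; lra). apply Hno_zero; auto.
Qed.
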